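(* Let $C\subseteq\mathbb{R}^n$ be a nonempty compact convex set and let $f:\mathbb{R}^n\to\mathbb{R}$ be an abs-smooth function that is convex on $C$, with curvature constant $\mathcal{C}_f$ on $C$. Let $x^*$ be a minimizer of $f$ on $C$. Let $x\in C$, $\alpha\in(0,1]$ and $\epsilon\ge 0$ be arbitrary, and let $v\in C$ satisfy $$\Delta f(x;\alpha(v-x)) \le \min_{w\in C}\Delta f(x;\alpha(w-x)) + \tfrac{1}{2}\epsilon\alpha^2\,\mathcal{C}_f .$$ Then $$f(x)-f(x^* ) \le \frac{-\Delta f(x;\alpha(v-x))}{\alpha} + \frac{\alpha}{2}\,\mathcal{C}_f\,(1+\epsilon).$$
   Context: A function $f:\mathbb{R}^n\to\mathbb{R}$ is abs-smooth if it is locally Lipschitz and admits an abs-smooth form: for some $s\in\mathbb{N}\cup\{0\}$ there are $F=(F_1,\dots,F_s)\in\mathcal{C}^d(\mathbb{R}^{n+s+s},\mathbb{R}^s)$ and $\varphi\in\mathcal{C}^d(\mathbb{R}^{n+s},\mathbb{R})$ with $d\ge1$ such that $y=f(x)$ is computed by $z_i=F_i(x,z_1,\dots,z_{i-1},|z_1|,\dots,|z_{i-1}|)$ for $i=1,\dots,s$ and $y=\varphi(x,z)$. For a point $\mathring{x}$, write $\mathring z=z(\mathring x)$ and let $Z=\partial_x F$, $M=\partial_z F$, $L=\partial_{|z|}F$ (evaluated at $(\mathring x,\mathring z,|\mathring z|)$; $M,L$ strictly lower triangular), $a=\partial_x\varphi$, $b=\partial_z\varphi$ (evaluated at $(\mathring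 x,\mathring z)$). The piecewise linearization of $f$ at $\mathring x$ is $f_{PL,\mathring x}(x)=d_0+a^Tx+b^Tz$ where $z$ solves $z=c+Zx+Mz+L|z|$ (uniquely, recursively), with constants $c\in\mathbb{R}^s$, $d_0\in\mathbb{R}$ chosen so that $f_{PL,\mathring x}(\mathring x)=f(\mathring x)$ (namely $c=\mathring z-Z\mathring x-M\mathring z-L|\mathring z|$, $d_0=f(\mathring x)-a^T\mathring x-b^T\mathring z$). The abs-linearization is $\Delta f(\mathring x;x-\mathring x):=f_{PL,\mathring x}(x)-f(\mathring x)$, so $\Delta f(\mathring x;0)=0$. The curvature constant of $f$ on $C$ is $$\mathcal{C}_f:=\sup_{x,v\in C,\ \alpha\in(0,1],\ y=x+\alpha(v-x)}\frac{2}{\alpha^2}\big|f(y)-f(x)-\Delta f(x;y-x)\big|,$$ which is finite for compact $C$. *)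

From HB Require Import structures.
From mathcomp Require Import all_boot all_order all_algebra.
From mathcomp Require Import all_classical all_reals all_analysis.
Set Implicit Arguments. Unset Strict Implicit. Unset Printing Implicit Defensive.
Import Order.TTheory GRing.Theory Num.Theory.
Import numFieldNormedType.Exports.
Local Open Scope classical_set_scope.
Local Open Scope ring_scope.

Section AbsSmooth.
Variables (R : realType) (n s : nat).

Notation vec k := 'rV[R]_k.
(* the argument (x, z, |z|) of F in R^{n+s+s} *)
Notation argF := ((vec n * vec s) * vec s)%type.
Notation argP := (vec n * vec s)%type.

Definition absv (z : vec s) : vec s := map_mx (fun t : R => `|t|) z.

(* C^1 (hence covers every C^d, d >= 1): differentiable everywhere with
   continuous derivative (in finite dimension: each directional derivative
   p |-> 'd G p v continuous). *)
Definition C1 {V W : normedModType R} (G : V -> W) : Prop :=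
  (forall p, differentiable G p) /\ (forall v : V, continuous (fun p => 'd G p v)).

(* F_i only depends on x and on z_j, |z_j| for j < i
   (so that M = dF/dz, L = dF/d|z| are strictly lower triangular). *)
Definition lower_triangular_form (F : argF -> vec s) : Prop :=
  forall (x : vec n) (z1 z2 w1 w2 : vec s) (i : 'I_s),
    (forall j : 'I_s, (j < i)%N -> z1 ord0 j = z2 ord0 j /\ w1 ord0 j = w2 ord0 j) ->
    F (x, z1, w1) ord0 i = F (x, z2, w2) ord0 i.

(* switching vector z(x): z_i = F_i(x, z_1..z_{i-1}, |z_1|..|z_{i-1}|),
   computed recursively; with lower triangular F, s Picard iterations
   from 0 compute exactly this recursion. *)
Definition zval (F : argF -> vec s) (x : vec n) : vec s :=
  iter s (fun z => F (x, z, absv z)) 0.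

Definition absf (F : argF -> vec s) (phi : argP -> R) (x : vec n) : R :=
  phi (x, zval F x).

(* z of the piecewise linearization at x0, evaluated at x:
   z = c + Z x + M z + L |z|, i.e. z = F(p0) + dF(p0)[(x - x0, z - z0, |z| - |z0|)] *)
Definition zPL (F : argF -> vec s) (x0 x : vec n) : vec s :=
  let z0 := zval F x0 in
  let p0 := (x0, z0, absv z0) in
  iter s (fun z => F p0 + 'd F p0 (x - x0, z - z0, absv z - absv z0)) 0.

(* piecewise linearization f_{PL,x0}(x) = d0 + a^T x + b^T z *)
Definition fPL (F : argF -> vec s) (phi : argP -> R) (x0 x : vec n) : R :=
  let z0 := zval F x0 in
  absf F phi x0 + 'd phi (x0, z0) (x - x0, zPL F x0 x - z0).

Definition absLin (F : argF -> vec s) (phi : argP -> R) (x0 h : vec n) : R :=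
  fPL F phi x0 (x0 + h) - absf F phi x0.

Definition curv_set (F : argF -> vec s) (phi : argP -> R) (C : set (vec n)) : set R :=
  [set r | exists x v (a : R), [/\ C x, C v, 0 < a <= 1 &
     r = 2 / a ^+ 2 * `| absf F phi (x + a *: (v - x)) - absf F phi x
                         - absLin F phi x (a *: (v - x)) | ] ].

Definition curvature_constant F phi C : R := sup (curv_set F phi C).

End AbsSmooth.

Definition locally_lipschitz {R : realType} {n : nat} (f : 'rV[R]_n -> R) : Prop :=
  forall x, exists2 r : R, 0 < r & exists K : R, forall y z,
      ball x r y -> ball x r z -> `|f y - f z| <= K * `|y - z|.

Definition convex_setR {R : realType} {n : nat} (C : set 'rV[R]_n) : Prop :=
  forall x y (t : R), C x -> C y -> 0 <= t <= 1 -> C (x + t *: (y - x)).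

Definition convex_on {R : realType} {n : nat} (C : set 'rV[R]_n) (f : 'rV[R]_n -> R) : Prop :=
  forall x y (t : R), C x -> C y -> 0 <= t <= 1 ->
    f (x + t *: (y - x)) <= f x + t * (f y - f x).

From HB Require Import structures.
From mathcomp Require Import all_boot all_order all_algebra.
From mathcomp Require Import all_classical all_reals all_analysis.
From mathcomp Require Import ring lra.
Set Implicit Arguments. Unset Strict Implicit. Unset Printing Implicit Defensive.
Import Order.TTheory GRing.Theory Num.Theory.
Import numFieldNormedType.Exports.
Local Open Scope classical_set_scope.
Local Open Scope ring_scope.

(* The curvature constant bounds the linearization error on the step from x
   towards x*, and convexity bounds f along that step by the secant; together
   Delta f(x; alpha (x* - x)) <= alpha (f x* - f x) + alpha^2/2 C_f.  The
   approximate optimality of v trades x* for v at the extra cost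
   eps alpha^2/2 C_f, and dividing by alpha gives the bound. *)

Section CurvatureConstant.
Variables (R : realType) (n s : nat).
Variables (F : ('rV[R]_n * 'rV[R]_s * 'rV[R]_s)%type -> 'rV[R]_s)
          (phi : ('rV[R]_n * 'rV[R]_s)%type -> R) (C : set 'rV[R]_n).
Hypothesis curv_bounded : has_ubound (curv_set F phi C).

Local Notation f := (absf F phi).
Local Notation K := (curvature_constant F phi C).

Lemma absLin_err_le_curvature (x v : 'rV[R]_n) (a : R) :
  C x -> C v -> 0 < a <= 1 ->
  `| f (x + a *: (v - x)) - f x - absLin F phi x (a *: (v - x)) | <= a ^+ 2 / 2 * K.
Proof.
move=> Cx Cv a01; have a0 : 0 < a by case/andP: a01.
set err := `| _ |.
have err_in : curv_set F phi C (2 / a ^+ 2 * err) by exists x, v, a.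
have curv_sup : has_sup (curv_set F phi C) by split; first exists (2 / a ^+ 2 * err).
have := sup_upper_bound curv_sup err_in.
have a2 : 0 < a ^+ 2 by rewrite exprn_gt0.
rewrite -(ler_pM2l (_ : 0 < a ^+ 2 / 2)) ?divr_gt0 //.
suff -> : a ^+ 2 / 2 * (2 / a ^+ 2 * err) = err by [].
by field; rewrite gt_eqF.
Qed.

Lemma absLin_le_secant (x w : 'rV[R]_n) (a : R) :
  convex_on C f -> C x -> C w -> 0 < a <= 1 ->
  absLin F phi x (a *: (w - x)) <= a * (f w - f x) + a ^+ 2 / 2 * K.
Proof.
move=> convf Cx Cw a01.
have := absLin_err_le_curvature Cx Cw a01; rewrite ler_norml => /andP[err_lb _].
have secant : f (x + a *: (w - x)) <= f x + a * (f w - f x).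
  by apply: convf => //; case/andP: a01 => a0 ->; rewrite ltW.
lra.
Qed.

End CurvatureConstant.

Theorem mainTheorem1 (R : realType) (n s : nat)
  (F : ('rV[R]_n * 'rV[R]_s * 'rV[R]_s)%type -> 'rV[R]_s)
  (phi : ('rV[R]_n * 'rV[R]_s)%type -> R)
  (C : set 'rV[R]_n) :
  C1 F -> C1 phi -> lower_triangular_form F ->
  locally_lipschitz (absf F phi) ->
  C !=set0 -> compact C -> convex_setR C ->
  convex_on C (absf F phi) ->
  has_ubound (curv_set F phi C) ->
  forall xstar : 'rV[R]_n, C xstar -> (forall y, C y -> absf F phi xstar <= absf F phi y) ->
  forall (x v : 'rV[R]_n) (alpha eps : R),
    C x -> 0 < alpha <= 1 -> 0 <= eps -> C v ->
    (forall w, C w ->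
       absLin F phi x (alpha *: (v - x))
       <= absLin F phi x (alpha *: (w - x))
          + 1 / 2 * eps * alpha ^+ 2 * curvature_constant F phi C) ->
    absf F phi x - absf F phi xstar
    <= - absLin F phi x (alpha *: (v - x)) / alpha
       + alpha / 2 * curvature_constant F phi C * (1 + eps).
Proof.
move=> _ _ _ _ _ _ _ convf curv_bounded xs Cxs _ x v a e Cx a01 _ _ v_approx_min.
have a0 : 0 < a by case/andP: a01.
have step_to_xs := absLin_le_secant curv_bounded convf Cx Cxs a01.
have v_vs_xs := v_approx_min xs Cxs.
rewrite -(ler_pM2l a0).
have -> : a * (- absLin F phi x (a *: (v - x)) / a
               + a / 2 * curvature_constant F phi C * (1 + e))
          = - absLin F phi x (a *: (v - x))
            + a ^+ 2 / 2 * curvature_constant F phi C * (1 + e).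
  by field; rewrite gt_eqF.
lra.
Qed.
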